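(* Let $n\ge 2$, $q=z_n=(1,2,\dots,n)^T$ and $X=F_n(z_n)$. Then $X^TX$ is invertible and the log-prime estimator $\ln\hat q=(X^TX)^{-1}X^T\ln z_n$ satisfies, for $i=1,\dots,n$, $$(\ln\hat q)_i=\begin{cases}\ln i,& i\text{ prime},\\ 0,& i\text{ not prime}.\end{cases}$$
   Context: Logarithms of vectors are entry-wise. For $1\le i\le n$, $e_{\bar i|n}\in\mathbb{R}^n$ has $k$-th entry $1$ if $i\mid k$, else $0$. For $2\le i\le n$, $f_{i|n}=\sum_{t=1}^{\lfloor \log_i n\rfloor} e_{\overline{i^t}|n}$, and by convention $f_{1|n}=1_n$ (all-ones vector). $F_n(z_n)=[f_{1|n}\ f_{2|n}\ \cdots\ f_{n|n}]\in\mathbb{R}^{n\times n}$. *)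

From HB Require Import structures.
From Stdlib Require Import Reals ClassicalEpsilon FunctionalExtensionality.
From mathcomp Require Import all_boot all_order all_algebra.
Set Implicit Arguments. Unset Strict Implicit. Unset Printing Implicit Defensive.
Import GRing.Theory.

Definition Reqb (x y : R) : bool := if Req_EM_T x y then true else false.
Lemma Reqb_axiom : Equality.axiom Reqb.
Proof. by move=> x y; rewrite /Reqb; case: Req_EM_T => h; constructor. Qed.
HB.instance Definition _ := hasDecEq.Build R Reqb_axiom.

Definition Rfind (P : pred R) (n : nat) : option R :=
  match excluded_middle_informative (exists x, P x) with
  | left H => Some (proj1_sig (constructive_indefinite_description _ H))
  | right _ => None
  end.
Lemma Rfind_correct P n x : Rfind P n = Some x -> P x.
Proof.
rewrite /Rfind; case: excluded_middle_informative => // H [<-].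
exact: proj2_sig (constructive_indefinite_description _ H).
Qed.
Lemma Rfind_complete (P : pred R) : (exists x, P x) -> exists n, Rfind P n.
Proof. by move=> H; exists 0%N; rewrite /Rfind; case: excluded_middle_informative. Qed.
Lemma Rfind_ext (P Q : pred R) : P =1 Q -> Rfind P =1 Rfind Q.
Proof. by move=> /functional_extensionality ->. Qed.
HB.instance Definition _ := hasChoice.Build R Rfind_correct Rfind_complete Rfind_ext.

Lemma R_addA : ssrfun.associative Rplus. Proof. by move=> *; rewrite Rplus_assoc. Qed.
Lemma R_addC : ssrfun.commutative Rplus. Proof. exact: Rplus_comm. Qed.
Lemma R_add0 : ssrfun.left_id R0 Rplus. Proof. exact: Rplus_0_l. Qed.
Lemma R_addN : ssrfun.left_inverse R0 Ropp Rplus. Proof. exact: Rplus_opp_l. Qed.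
HB.instance Definition _ := GRing.isZmodule.Build R R_addA R_addC R_add0 R_addN.

Lemma R_mulA : ssrfun.associative Rmult. Proof. by move=> *; rewrite Rmult_assoc. Qed.
Lemma R_mulC : ssrfun.commutative Rmult. Proof. exact: Rmult_comm. Qed.
Lemma R_mul1 : ssrfun.left_id R1 Rmult. Proof. exact: Rmult_1_l. Qed.
Lemma R_mulDl : ssrfun.left_distributive Rmult Rplus.
Proof. by move=> *; rewrite Rmult_plus_distr_r. Qed.
Lemma R_one_neq0 : R1 != R0.
Proof. by apply/eqP; exact: R1_neq_R0. Qed.
HB.instance Definition _ :=
  GRing.Zmodule_isComNzRing.Build R R_mulA R_mulC R_mul1 R_mulDl R_one_neq0.

Definition Rinvx (x : R) : R := if x == R0 then R0 else Rinv x.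
Lemma R_mulVf (x : R) : x != R0 -> Rmult (Rinvx x) x = R1.
Proof. move=> h; rewrite /Rinvx (negbTE h); apply: Rinv_l; exact/eqP. Qed.
Lemma R_inv0 : Rinvx R0 = R0. Proof. by rewrite /Rinvx eqxx. Qed.
HB.instance Definition _ := GRing.ComNzRing_isField.Build R R_mulVf R_inv0.

Local Open Scope ring_scope.

(* f_{i|n}(k): for i = 1 it is 1; for 2 <= i <= n it is
   sum_{t=1}^{floor(log_i n)} [i^t | k], i.e. the k-th entry of
   sum_t e_{bar(i^t)|n}.  floor(log_i n) = trunc_log i n. *)
Definition f_entry (n i k : nat) : nat :=
  if i == 1%N then 1%N
  else (\sum_(1 <= t < (trunc_log i n).+1) (i ^ t %| k))%N.

(* F_n(z_n) = [f_{1|n} ... f_{n|n}] ; row index k (0-based, standing for k+1),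
   column index i (0-based, standing for i+1). *)
Definition Fn (n : nat) : 'M[R]_n :=
  \matrix_(k < n, i < n) (f_entry n i.+1 k.+1)%:R.

Definition zn (n : nat) : 'cV[R]_n := \col_(k < n) (INR k.+1).

Definition lnv (n : nat) (v : 'cV[R]_n) : 'cV[R]_n := \col_(k < n) ln (v k ord0).

Definition log_prime_estimator (n : nat) (X : 'M[R]_n) (y : 'cV[R]_n) : 'cV[R]_n :=
  invmx (X^T *m X) *m X^T *m lnv y.

(* [X = F_n(z_n)] is upper unitriangular, hence invertible, and so is [X^T X].
   On a prime column [p] the entry of row [k] counts the [t >= 1] with
   [p^t | k], i.e. it is the [p]-adic valuation of [k].  Unique factorisation
   [ln k = sum_p v_p(k) ln p] therefore says that [ln z_n = X v] exactly, where
   [v_p = ln p] on primes and [0] elsewhere, and least squares recovers an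
   exact solution [v]. *)
From HB Require Import structures.
From Stdlib Require Import Reals.
From mathcomp Require Import all_boot all_order all_algebra.
From mathcomp Require Import zify.
Import GRing.Theory.
Local Open Scope ring_scope.

Lemma normal_equations_exact (R : comUnitRingType) (m : nat)
    (X : 'M[R]_m) (v : 'cV[R]_m) :
  X \in unitmx -> invmx (X^T *m X) *m X^T *m (X *m v) = v.
Proof.
move=> uX; have uXtX : X^T *m X \in unitmx by rewrite unitmx_mul unitmx_tr uX.
by rewrite -mulmxA (mulmxA _ X) mulKmx.
Qed.

Lemma natr_INR (m : nat) : (m%:R : R) = INR m.
Proof. by elim: m => [//|m IH]; rewrite mulrS IH S_INR Rplus_comm. Qed.

Lemma ln_prod_nat (I : Type) (r : seq I) (P : pred I) (F : I -> nat) :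
  (forall i, P i -> (0 < F i)%N) ->
  ln (INR (\prod_(i <- r | P i) F i)) = \sum_(i <- r | P i) ln (INR (F i)).
Proof.
move=> F_gt0.
pose Q (x : nat) (y : R) := (0 < x)%N /\ ln (INR x) = y.
suff [] : Q (\prod_(i <- r | P i) F i) (\sum_(i <- r | P i) ln (INR (F i))) by [].
apply: (big_ind2 Q) => [|x1 x2 y1 y2 [x1_gt0 <-] [x2_gt0 <-]|i Pi].
- by split; rewrite // ln_1.
- split; first by rewrite muln_gt0 x1_gt0.
  by rewrite mult_INR ln_mult //; apply: lt_0_INR; apply/ltP.
- by split; last by []; apply: F_gt0.
Qed.

Lemma INR_expn (a e : nat) : INR (a ^ e) = pow (INR a) e.
Proof. by elim: e => [|e IH] //; rewrite expnS mult_INR IH. Qed.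

Lemma ln_nat_logn (n k : nat) : (0 < k)%N -> (k <= n)%N ->
  ln (INR k) = \sum_(0 <= p < n.+1) (logn p k)%:R * ln (INR p).
Proof.
move=> k_gt0 le_kn.
rewrite -{1}(partnT k_gt0) (widen_partn _ le_kn) ln_prod_nat; last first.
  by move=> [|p] _; rewrite expn_gt0 // lognE.
apply: eq_bigr => -[|p] _; first by rewrite lognE ln_1 mul0r.
by rewrite INR_expn ln_pow ?natr_INR //; apply: lt_0_INR; lia.
Qed.

Lemma sum_nat_leq_minn (m n : nat) :
  (\sum_(1 <= t < n.+1) (t <= m))%N = minn m n.
Proof.
elim: n => [|n IH]; first by rewrite big_geq //; lia.
by rewrite big_nat_recr //= IH; case: (leqP n.+1 m) => /=; lia.
Qed.

Lemma f_entry_prime (n p k : nat) : prime p -> (0 < k)%N -> (k <= n)%N ->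
  f_entry n p k = logn p k.
Proof.
move=> p_pr k_gt0 le_kn; have p_gt1 := prime_gt1 p_pr.
have le_logn : (logn p k <= trunc_log p n)%N.
  apply: trunc_log_max => //; apply: leq_trans le_kn.
  exact: dvdn_leq (pfactor_dvdnn p k).
rewrite /f_entry ifF; last by apply/eqP; lia.
under eq_bigr => t _ do rewrite pfactor_dvdn //.
by rewrite sum_nat_leq_minn; lia.
Qed.

Lemma f_entry_eq0 (n j k : nat) : (1 < j)%N -> (0 < k)%N -> (k < j)%N ->
  f_entry n j k = 0%N.
Proof.
move=> j_gt1 k_gt0 lt_kj; rewrite /f_entry ifF; last by apply/eqP; lia.
rewrite big1_seq //= => t; rewrite mem_index_iota => /andP [t_gt0 _].
apply/eqP; rewrite eqb0; apply/negP => /(dvdn_leq k_gt0); apply/negP.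
by rewrite -ltnNge (leq_trans lt_kj) // -[leqLHS]expn1 leq_exp2l.
Qed.

Lemma f_entry_id (n j : nat) : (0 < j)%N -> (j <= n)%N -> f_entry n j j = 1%N.
Proof.
move=> j_gt0 le_jn; rewrite /f_entry; case: eqP => // /eqP j_neq1.
have j_gt1 : (1 < j)%N by lia.
have log_gt0 : (0 < trunc_log j n)%N by rewrite trunc_log_gt0 j_gt1 /=; lia.
rewrite big_ltn ?ltnS // expn1 dvdnn big1_seq //= => t; rewrite mem_index_iota => /andP [t_gt1 _].
apply/eqP; rewrite eqb0; apply/negP => /(dvdn_leq j_gt0); apply/negP.
by rewrite -ltnNge -[ltnLHS]expn1 ltn_exp2l.
Qed.

Lemma Fn_unitmx (n : nat) : Fn n \in unitmx.
Proof.
have Fn_trig : is_trig_mx (Fn n).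
  by apply/is_trig_mxP => k j lt_kj; rewrite mxE f_entry_eq0 //; lia.
rewrite unitmxE det_trig // big1 ?unitr1 // => j _.
by rewrite mxE f_entry_id.
Qed.

Definition log_primes (n : nat) : 'cV[R]_n :=
  \col_(i < n) (if prime i.+1 then ln (INR i.+1) else 0).

Lemma lnv_zn (n : nat) : lnv (zn n) = Fn n *m log_primes n.
Proof.
apply/matrixP => k j; rewrite (ord1 j) !mxE.
rewrite (@ln_nat_logn n) // big_nat_recl // lognE mul0r add0r big_mkord.
apply: eq_bigr => i _; rewrite !mxE.
have [i_pr|i_npr] := boolP (prime i.+1); first by rewrite f_entry_prime.
by rewrite lognE (negbTE i_npr) mul0r mulr0.
Qed.

Theorem theorem3p4 (n : nat) (hn : (2 <= n)%N) :
  ((Fn n)^T *m Fn n) \in unitmx /\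
  forall i : 'I_n,
    log_prime_estimator (Fn n) (zn n) i ord0 =
    (if prime i.+1 then ln (INR i.+1) else 0).
Proof.
split; first by rewrite unitmx_mul unitmx_tr Fn_unitmx.
move=> i; rewrite /log_prime_estimator lnv_zn normal_equations_exact ?Fn_unitmx //.
by rewrite mxE.
Qed.
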